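(* Let $k\in\mathbb{N}$, $P$ the uniform distribution on $[0,1]$, $\beta=\{\frac jk:1\leq j\leq k\}$, and $J_{k,j}=[\frac{j-1}k,\frac jk]$ for $1\leq j\leq k$. Let $n\geq k$, let $\alpha_n$ be a conditional optimal set of $n$-points for $P$ with respect to $\beta$, and put $n_j=\mathrm{card}(\alpha_n\cap J_{k,j})$. Then for $2\leq i<j\leq k$, $|n_i-n_j|\in\{0,1\}$.
   Context: For a Borel probability measure $P$ on $\mathbb{R}$ and finite $\beta$ with $\mathrm{card}(\beta)=r$, for $n\ge r$, $V_n=\inf\{\int\min_{a\in\alpha\cup\beta}(x-a)^2dP(x):\mathrm{card}(\alpha)\le n-r\}$; a set $\alpha\cup\beta$ attaining the infimum, with each point of $\beta$ having a Voronoi region of positive $P$-measure, is a conditional optimal set of $n$-points with respect to $\beta$ (it contains $\beta$). *)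

From HB Require Import structures.
From mathcomp Require Import all_boot all_order all_algebra.
From mathcomp Require Import all_classical all_reals all_analysis.
Set Implicit Arguments. Unset Strict Implicit. Unset Printing Implicit Defensive.
Import Order.TTheory GRing.Theory Num.Theory.
Local Open Scope classical_set_scope.
Local Open Scope ring_scope.

(* Finite subsets of R are represented by duplicate-free sequences. *)

(* min_{a in g} (x - a)^2 (g is always nonempty where this is used; the
   head term only duplicates an element of g). *)
Definition dist2 (R : realType) (g : seq R) (x : R) : R :=
  foldr (fun a m => Num.min ((x - a) ^+ 2) m) ((x - head 0 g) ^+ 2) g.

Definition quant_err (R : realType) (P : probability (measurableTypeR R) R) (g : seq R) : \bar R :=
  (\int[P]_x (dist2 g x)%:E)%E.

Definition voronoi (R : realType) (g : seq R) (b : R) : set R :=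
  [set x | forall a, a \in g -> `|x - b| <= `|x - a|].

Definition cond_opt_set (R : realType) (P : probability (measurableTypeR R) R) (beta : seq R)
    (n : nat) (gamma : seq R) : Prop :=
  [/\ uniq gamma,
      exists alpha : seq R, [/\ uniq alpha, (size alpha <= n - size beta)%N
                                & gamma =i alpha ++ beta],
      (forall alpha' : seq R, uniq alpha' -> (size alpha' <= n - size beta)%N ->
          (quant_err P gamma <= quant_err P (alpha' ++ beta))%E)
    & (forall b, b \in beta -> (0 < P (voronoi gamma b))%E)].

Definition beta_k (R : realType) (k : nat) : seq R :=
  [seq (j%:R / k%:R) | j <- iota 1 k].

Definition inJ (R : realType) (k j : nat) (x : R) : bool :=
  ((j.-1)%:R / k%:R <= x) && (x <= j%:R / k%:R).

Definition cardJ (R : realType) (k j : nat) (gamma : seq R) : nat :=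
  size [seq x <- gamma | inJ k j x].

Definition unif01 (R : realType) : probability (measurableTypeR R) R := uniform_prob (@ltr01 R).

From HB Require Import structures.
From mathcomp Require Import all_boot all_order all_algebra.
From mathcomp Require Import all_classical all_reals all_analysis.
From mathcomp Require Import ring lra zify measurable_realfun.
Set Implicit Arguments. Unset Strict Implicit. Unset Printing Implicit Defensive.
Import Order.TTheory GRing.Theory Num.Theory.
Import numFieldNormedType.Exports.
Local Open Scope ring_scope.

(* Every j/k lies in gamma, so for i >= 2 the cell J_i has both endpoints in
   gamma and n_i - 2 points of gamma in its interior.  If a finite set contains
   the endpoints of an interval of length L and has m points inside it, the
   integral of the squared distance to the set over the interval is at least
   L^3 / (12 (m+1)^2), with equality for m evenly spaced points (split at an
   interior point: (L, M) |-> L^3 / M^2 is subadditive).  If n_i >= n_j + 2,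
   take one interior point away from J_i, put one more into J_j and respace
   both cells evenly: the error is unchanged outside J_i and J_j and, because
   1/x^2 - 1/(x+1)^2 is strictly decreasing, strictly smaller on them,
   contradicting optimality. *)

Section Dist2.
Variable R : realType.
Implicit Types (s t : seq R) (a b x : R).

Lemma dist2_le s x a : a \in s -> dist2 s x <= (x - a) ^+ 2.
Proof.
rewrite /dist2; elim: s (_ ^+ 2) => // b s IH m; rewrite inE /= ge_min.
by case/orP=> [/eqP-> | /IH->]; rewrite ?lexx ?orbT.
Qed.

(* [head 0 s] accounts for the junk value [x ^+ 2] of [dist2 [::] x]. *)
Lemma dist2_attained s x : exists2 a, a \in head 0 s :: s & dist2 s x = (x - a) ^+ 2.
Proof.
rewrite /dist2; elim: s (head 0 s) => [|b s IH] h /=; first by exists h; rewrite ?inE.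
have [a ahs ->] := IH h; have [ba|ab] := leP ((x - b) ^+ 2) ((x - a) ^+ 2).
  by exists b; rewrite ?min_l // !inE eqxx orbT.
exists a; rewrite ?min_r ?ltW //.
by move: ahs; rewrite !inE => /orP[]->; rewrite ?orbT.
Qed.

Lemma dist2_ge0 s x : 0 <= dist2 s x.
Proof. by have [a _ ->] := dist2_attained s x; exact: sqr_ge0. Qed.

Lemma dist2_ge s x m : s != [::] ->
  (forall a, a \in s -> m <= (x - a) ^+ 2) -> m <= dist2 s x.
Proof.
case: s => // b s _ le_m; have [a as_ ->] := dist2_attained (b :: s) x.
by apply: le_m; move: as_; rewrite in_cons => /predU1P[->|]; rewrite ?mem_head.
Qed.

Lemma dist2_dominated s t x : {subset s <= t} -> s != [::] ->
  (forall a, a \in t -> exists2 b, b \in s & (x - b) ^+ 2 <= (x - a) ^+ 2) ->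
  dist2 t x = dist2 s x.
Proof.
move=> st s0 dom; apply/le_anti/andP; split.
  by apply: dist2_ge => // a /st; exact: dist2_le.
have t0 : t != [::] by case: s s0 st {dom} => // b s _ /(_ b (mem_head _ _)); case: t.
by apply: dist2_ge => // a /dom[b bs]; apply: le_trans; exact: dist2_le.
Qed.

Lemma dist2_eq_mem s t : s =i t -> dist2 s =1 dist2 t.
Proof.
move=> st x; have [s0|s0] := eqVneq s [::].
  have -> : t = [::] by case: t st => // b t /(_ b); rewrite mem_head s0.
  by rewrite s0.
apply: esym; apply: dist2_dominated => // [a|a]; rewrite -?st // => as_.
by exists a.
Qed.

Lemma window_dominated c d a x : c < a < d -> ~~ (c < x < d) ->
  (x - c) ^+ 2 <= (x - a) ^+ 2 \/ (x - d) ^+ 2 <= (x - a) ^+ 2.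
Proof. by case/andP=> ca ad; rewrite negb_and -!leNgt => /orP[xc|dx]; [left|right]; nra. Qed.

Lemma measurable_sqr_sub (D : set R) c : measurable_fun D (fun x => (x - c) ^+ 2).
Proof. by apply: measurable_funX; apply: measurable_funB. Qed.

Lemma measurable_dist2 (D : set R) s : measurable_fun D (dist2 s).
Proof.
rewrite /dist2; elim: s (head 0 s) => [|b s IH] h //=; first exact: measurable_sqr_sub.
by apply: measurable_minr; [exact: measurable_sqr_sub | exact: IH].
Qed.

End Dist2.

Section IntervalIntegral.
Variable R : realType.
Implicit Types (a b c d p q x : R) (f g : R -> R).

Definition Iab a b f : \bar R := (\int[@lebesgue_measure R]_(x in `[a, b]) (f x)%:E)%E.

Lemma Iab_ge0 a b f : (forall x, 0 <= f x) -> (0 <= Iab a b f)%E.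
Proof. by move=> f0; apply: integral_ge0 => x _; rewrite lee_fin. Qed.

Lemma eq_Iab a b f g : (forall x, a <= x <= b -> f x = g x) -> Iab a b f = Iab a b g.
Proof. by move=> fg; apply: eq_integral => x; rewrite inE /= in_itv /= => /fg->. Qed.

Lemma le_Iab a b f g : measurable_fun setT f -> measurable_fun setT g ->
  (forall x, 0 <= f x) -> (forall x, a <= x <= b -> f x <= g x) ->
  (Iab a b f <= Iab a b g)%E.
Proof.
move=> mf mg f0 fg; apply: ge0_le_integral => //=.
- by move=> x _; rewrite lee_fin.
- by apply/measurable_EFinP; exact: measurable_funS mf.
- by apply/measurable_EFinP; exact: measurable_funS mg.
Qed.

Lemma Iab_split a b c f : a <= b -> b <= c -> measurable_fun setT f ->
  (forall x, 0 <= f x) -> Iab a c f = (Iab a b f + Iab b c f)%E.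
Proof.
move=> ab bc mf f0; have mfE D : measurable_fun D (fun x => (f x)%:E).
  by apply/measurable_EFinP; exact: measurable_funS mf.
rewrite /Iab (@itv_bndbnd_setU _ _ _ (BLeft b)) ?bnd_simp //.
rewrite ge0_integral_setU //= ?integral_itv_bndo_bndc //.
- exact: mfE.
- by move=> x _; rewrite lee_fin.
- apply/disj_setPS => x [] /=; rewrite !in_itv /= => /andP[_ xb] /andP[bx _].
  by move: (lt_le_trans xb bx); rewrite ltxx.
Qed.

Lemma Iab_xx a f : Iab a a f = 0%E.
Proof. by rewrite /Iab set_itv1 integral_set1. Qed.

Lemma Iab_sqr p a b : a <= b ->
  Iab a b (fun x => (x - p) ^+ 2) = (((b - p) ^+ 3 - (a - p) ^+ 3) / 3)%:E.
Proof.
rewrite le_eqVlt => /predU1P[-> | ab]; first by rewrite Iab_xx subrr mul0r.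
pose F x : R := (x - p) ^+ 3 / 3.
have dF x : is_derive x 1 F ((x - p) ^+ 2).
  have scE (u v : R) : u *: v = u * v by [].
  by apply: is_derive_eq; rewrite !scE; field.
have cF : continuous F.
  by move=> x; apply: differentiable_continuous; rewrite -derivable1_diffP.
rewrite /Iab (@continuous_FTC2 _ _ F) //.
- by rewrite /F -EFinB mulrBl.
- apply: continuous_subspaceT => x.
  by apply: differentiable_continuous; rewrite -derivable1_diffP; exact: ex_derive.
- split; [by move=> x _; exact: ex_derive | exact/cvg_at_right_filter/cF | exact/cvg_at_left_filter/cF].
- by move=> x _; rewrite derive1E; exact: derive_val.
Qed.

Lemma Iab_lt_off_windows f g a c1 d1 c2 d2 b :
  a <= c1 -> c1 <= d1 -> d1 <= c2 -> c2 <= d2 -> d2 <= b ->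
  measurable_fun setT f -> measurable_fun setT g ->
  (forall x, 0 <= f x) -> (forall x, 0 <= g x) -> Iab a b f \is a fin_num ->
  (forall x, ~~ (c1 < x < d1) -> ~~ (c2 < x < d2) -> f x = g x) ->
  (Iab c1 d1 g + Iab c2 d2 g < Iab c1 d1 f + Iab c2 d2 f)%E ->
  (Iab a b g < Iab a b f)%E.
Proof.
move=> ac1 c1d1 d1c2 c2d2 d2b mf mg f0 g0 fin_f fg win_lt.
have split5 (h : R -> R) : measurable_fun setT h -> (forall x, 0 <= h x) -> Iab a b h =
    (Iab a c1 h + Iab d1 c2 h + Iab d2 b h + (Iab c1 d1 h + Iab c2 d2 h))%E.
  move=> mh h0; have [c2b d1b c1b] : [/\ c2 <= b, d1 <= b & c1 <= b] by split; lra.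
  rewrite (Iab_split ac1 c1b mh h0) (Iab_split c1d1 d1b mh h0).
  rewrite (Iab_split d1c2 c2b mh h0) (Iab_split c2d2 d2b mh h0).
  (* Generalize first: rewriting with [addeA] would unfold [Iab] to an integral difference. *)
  move: (Iab a c1 h) (Iab c1 d1 h) (Iab d1 c2 h) (Iab c2 d2 h) (Iab d2 b h) => A1 W1 A2 W2 A3.
  by rewrite !addeA (addeAC A1) (addeAC _ W2) (addeAC _ W1).
have off_eq x : x <= c1 \/ d1 <= x <= c2 \/ d2 <= x -> f x = g x.
  case=> [xc1|[/andP[d1x xc2]|d2x]]; apply: fg; apply/negP => /andP[lx rx]; lra.
have offE : (Iab a c1 g + Iab d1 c2 g + Iab d2 b g = Iab a c1 f + Iab d1 c2 f + Iab d2 b f)%E.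
  congr (_ + _ + _)%E; apply: eq_Iab => x /andP[lx rx]; apply/esym/off_eq; lra.
move: fin_f win_lt; rewrite (split5 g mg g0) (split5 f mf f0) offE.
set X := (Iab a c1 f + _ + _)%E; set W := (Iab c1 d1 f + _)%E.
have X0 : (0 <= X)%E by apply: adde_ge0; [apply: adde_ge0 |]; exact: Iab_ge0.
have W0 : (0 <= W)%E by apply: adde_ge0; exact: Iab_ge0.
rewrite (ge0_fin_numE (adde_ge0 X0 W0)) => XW_fin win_lt; rewrite lteD2lE // ge0_fin_numE //.
by apply: le_lt_trans XW_fin; exact: leeDl.
Qed.

End IntervalIntegral.

Lemma count_add3 (T : Type) (a a1 a2 a3 : pred T) (s : seq T) :
  (forall x, a x = a1 x + a2 x + a3 x :> nat)%N ->
  (count a s = count a1 s + count a2 s + count a3 s)%N.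
Proof. by move=> h; elim: s => //= x s ->; rewrite h; lia. Qed.

Section QuantizationBounds.
Variable R : realType.
Implicit Types (s : seq R) (a c d p q x : R).

Definition grid_err (L M : R) : R := L ^+ 3 / (12 * M ^+ 2).

Lemma grid_err1 L : grid_err L 1 = L ^+ 3 / 12.
Proof. by rewrite /grid_err expr1n mulr1. Qed.

Lemma grid_err_subadd A B p q : 0 <= A -> 0 <= B -> 0 < p -> 0 < q ->
  grid_err (A + B) (p + q) <= grid_err A p + grid_err B q.
Proof.
move=> A0 B0 p0 q0; rewrite -subr_ge0.
have -> : grid_err A p + grid_err B q - grid_err (A + B) (p + q) =
    (A * q - B * p) ^+ 2 * (A * q * (2 * p + q) + B * p * (p + 2 * q)) /
    (12 * p ^+ 2 * q ^+ 2 * (p + q) ^+ 2).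
  by rewrite /grid_err; field; rewrite !gt_eqF // addr_gt0.
have [p0' q0'] := (ltW p0, ltW q0).
apply: divr_ge0; first apply: mulr_ge0; first exact: sqr_ge0.
  by apply: addr_ge0; apply: mulr_ge0; rewrite ?mulr_ge0 //; lra.
by rewrite !mulr_ge0 // ?sqr_ge0 // ?addr_ge0.
Qed.

Lemma grid_err_le L M N : 0 <= L -> 0 < M <= N -> grid_err L N <= grid_err L M.
Proof.
move=> L0 /andP[M0 MN]; have N0 := lt_le_trans M0 MN.
rewrite /grid_err ler_wpM2l ?exprn_ge0 // lef_pV2 ?posrE ?mulr_gt0 ?exprn_gt0 //.
by rewrite ler_pM2l // lerXn2r // nnegrE ltW.
Qed.

Lemma grid_err_step_lt L p q : 0 < L -> 0 < p < q ->
  grid_err L q - grid_err L (q + 1) < grid_err L p - grid_err L (p + 1).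
Proof.
move=> L0 /andP[p0 pq]; have q0 := lt_trans p0 pq.
have stepE x : 0 < x -> grid_err L x - grid_err L (x + 1) =
    L ^+ 3 / 12 * ((2 * x + 1) / (x ^+ 2 * (x + 1) ^+ 2)).
  by move=> x0; rewrite /grid_err; field; rewrite !gt_eqF ?addr_gt0.
have pos x : 0 < x -> 0 < x ^+ 2 * (x + 1) ^+ 2 by move=> x0; rewrite mulr_gt0 ?exprn_gt0 ?addr_gt0.
rewrite !stepE // ltr_pM2l ?divr_gt0 ?exprn_gt0 // ltr_pdivrMr ?pos // mulrAC ltr_pdivlMr ?pos //.
have -> : (2 * q + 1) * (p ^+ 2 * (p + 1) ^+ 2) = (2 * q + 1) * p * (p * (p + 1) ^+ 2) by ring.
have -> : (2 * p + 1) * (q ^+ 2 * (q + 1) ^+ 2) = (2 * p + 1) * q * (q * (q + 1) ^+ 2) by ring.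
have cube_lt : p * (p + 1) ^+ 2 < q * (q + 1) ^+ 2.
  by apply: ltr_pM; rewrite ?sqr_ge0 ?ltW // ltr_pXn2r ?ltrD2r // ?(nnegrE, addr_ge0) ?ltW.
by apply: ltr_pM => //; nra.
Qed.

Lemma Iab_min_sqr p q : p <= q ->
  Iab p q (fun x => Num.min ((x - p) ^+ 2) ((x - q) ^+ 2)) = ((q - p) ^+ 3 / 12)%:E.
Proof.
move=> pq; set m := (p + q) / 2; have [pm mq] : p <= m /\ m <= q by rewrite /m; split; lra.
rewrite (@Iab_split _ p m q) //; last 2 first.
- by apply: measurable_minr; exact: measurable_sqr_sub.
- by move=> x; rewrite le_min !sqr_ge0.
rewrite (@eq_Iab _ p m _ (fun x => (x - p) ^+ 2)); last first.
  by move=> x /andP[px xm]; rewrite min_l //; rewrite /m in xm; nra.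
rewrite (@eq_Iab _ m q _ (fun x => (x - q) ^+ 2)); last first.
  by move=> x /andP[mx xq]; rewrite min_r //; rewrite /m in mx; nra.
by rewrite !Iab_sqr // -EFinD /m; congr EFin; field.
Qed.

Lemma Iab_dist2_gap s c d : c <= d -> c \in s -> d \in s ->
  (forall y, y \in s -> ~~ (c < y < d)) ->
  (((d - c) ^+ 3 / 12)%:E <= Iab c d (dist2 s))%E.
Proof.
move=> cd cs ds gap; rewrite -Iab_min_sqr //; apply: le_Iab.
- by apply: measurable_minr; exact: measurable_sqr_sub.
- exact: measurable_dist2.
- by move=> x; rewrite le_min !sqr_ge0.
move=> x /andP[cx xd]; apply: dist2_ge; first by case: (s) cs.
move=> a /gap; rewrite negb_and -!leNgt ge_min => /orP[ac|da]; apply/orP; [left|right]; nra.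
Qed.

Lemma Iab_dist2_cell_le s p q : p <= q -> p \in s -> q \in s ->
  (Iab p q (dist2 s) <= ((q - p) ^+ 3 / 12)%:E)%E.
Proof.
move=> pq ps qs; rewrite -Iab_min_sqr //; apply: le_Iab => [||x|x _].
- exact: measurable_dist2.
- by apply: measurable_minr; exact: measurable_sqr_sub.
- exact: dist2_ge0.
- by rewrite le_min !dist2_le.
Qed.

Lemma count_split_lt c q d s : c < q < d -> q \in s ->
  (count (fun y => c < y < q)%R s + count (fun y => q < y < d)%R s <
   count (fun y => c < y < d)%R s)%N.
Proof.
case/andP=> cq qd qs; have split_pt (y : R) :
    (c < y < d) = ((c < y < q)%R + (q < y < d)%R + (y == q))%N :> nat.
  case: (ltgtP y q) => [yq|qy|->]; rewrite ?cq ?qd //=.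
  - by rewrite (lt_trans yq qd) andbT; case: (c < y).
  - by rewrite (lt_trans cq qy); case: (y < d).
rewrite (count_add3 s split_pt).
by rewrite -[X in (X < _)%N]addn0 ltn_add2l -has_count has_pred1.
Qed.

Lemma Iab_dist2_ge s c d : c <= d -> c \in s -> d \in s ->
  ((grid_err (d - c) (count (fun y => c < y < d) s).+1%:R)%:E <= Iab c d (dist2 s))%E.
Proof.
move Em: (count _ s) => m; elim/ltn_ind: m c d Em => m IH c d Em cd cs ds.
case: (boolP (has (fun y => c < y < d) s)) => [/hasP[q qs cqd] | /hasPn gap]; last first.
  have -> : m = 0%N by rewrite -Em; apply/eqP; rewrite -leqn0 leqNgt -has_count; exact/hasPn.
  by rewrite grid_err1; exact: Iab_dist2_gap.
have [cq qd] := andP cqd.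
move: (count_split_lt cqd qs); rewrite Em.
move Em1 : (count _ s) => m1; move Em2 : (count _ s) => m2 m12.
have [lt1 lt2] : (m1 < m)%N /\ (m2 < m)%N by lia.
rewrite (Iab_split (ltW cq) (ltW qd) (@measurable_dist2 _ setT s) (dist2_ge0 s)).
apply: (le_trans _ (leeD (IH m1 lt1 c q Em1 (ltW cq) cs qs) (IH m2 lt2 q d Em2 (ltW qd) qs ds))).
rewrite -EFinD lee_fin; apply: (le_trans _ (grid_err_subadd _ _ _ _)); last 4 first.
- by rewrite subr_ge0 ltW.
- by rewrite subr_ge0 ltW.
- by rewrite ltr0n.
- by rewrite ltr0n.
have -> : q - c + (d - q) = d - c by ring.
apply: grid_err_le; first by rewrite subr_ge0.
by rewrite -natrD ltr0n ler_nat /=; lia.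
Qed.

Definition grid c d (M : nat) : seq R :=
  [seq c + t%:R * ((d - c) / M%:R) | t <- iota 1 M.-1].

Lemma size_grid c d M : size (grid c d M) = M.-1.
Proof. by rewrite size_map size_iota. Qed.

Lemma grid_inside c d M x : c < d -> x \in grid c d M -> c < x < d.
Proof.
move=> cd /mapP[t]; rewrite mem_iota => /andP[t1 tM] ->.
have M0 : (0 < M)%N by lia.
set h := (d - c) / M%:R; have h0 : 0 < h by rewrite divr_gt0 ?subr_gt0 ?ltr0n.
have -> : d = c + M%:R * h by rewrite /h; field; rewrite pnatr_eq0 -lt0n.
by rewrite ltrDl ltrD2l mulr_gt0 ?ltr0n //= ltr_pM2r // ltr_nat; lia.
Qed.

Lemma Iab_dist2_grid_le s c d (M : nat) : c <= d -> (0 < M)%N ->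
  c \in s -> d \in s -> {subset grid c d M <= s} ->
  (Iab c d (dist2 s) <= (grid_err (d - c) M%:R)%:E)%E.
Proof.
move=> cd M0 cs ds gs; set h := (d - c) / M%:R.
have M0' : M%:R != 0 :> R by rewrite pnatr_eq0 -lt0n.
have dE : d = c + M%:R * h by rewrite /h mulrCA divff // mulr1 addrC subrK.
have pts t : (t <= M)%N -> c + t%:R * h \in s.
  case: t => [_|t tM]; first by rewrite mul0r addr0.
  have [->|tM'] := eqVneq t.+1 M; first by rewrite -dE.
  by apply: gs; apply/mapP; exists t.+1; rewrite // mem_iota; lia.
have h0 : 0 <= h by rewrite divr_ge0 ?subr_ge0.
have cells t : (t <= M)%N -> (Iab c (c + t%:R * h) (dist2 s) <= (t%:R * h ^+ 3 / 12)%:E)%E.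
  elim: t => [|t IH] tM; first by rewrite !mul0r addr0 Iab_xx.
  have ct : c <= c + t%:R * h by rewrite lerDl mulr_ge0.
  have tt1 : c + t%:R * h <= c + t.+1%:R * h by rewrite lerD2l ler_wpM2r // ler_nat.
  rewrite (Iab_split ct tt1 (@measurable_dist2 _ setT s) (dist2_ge0 s)).
  have -> : t.+1%:R * h ^+ 3 / 12 =
      t%:R * h ^+ 3 / 12 + ((c + t.+1%:R * h) - (c + t%:R * h)) ^+ 3 / 12.
    by rewrite mulrSr; field.
  by rewrite EFinD leeD ?IH ?(ltnW tM) ?Iab_dist2_cell_le ?pts // ltnW.
rewrite {1}dE; apply: le_trans (cells M (leqnn M)) _.
by rewrite lee_fin le_eqVlt /grid_err /h; apply/orP; left; apply/eqP; field.
Qed.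

Lemma Iab_dist2_fin_num s a b c : a <= b -> c \in s -> Iab a b (dist2 s) \is a fin_num.
Proof.
move=> ab cs; rewrite ge0_fin_numE ?Iab_ge0 //; last exact: dist2_ge0.
apply: (@le_lt_trans _ _ (Iab a b (fun x => (x - c) ^+ 2))); last by rewrite Iab_sqr // ltry.
apply: le_Iab => [||x|x _].
- exact: measurable_dist2.
- exact: measurable_sqr_sub.
- exact: dist2_ge0.
- exact: dist2_le.
Qed.

End QuantizationBounds.

Section ConditionalOptimality.
Variable R : realType.
Implicit Types (s : seq R) (x : R).

Lemma quant_err_unif01 s : quant_err (unif01 R) s = Iab 0 1 (dist2 s).
Proof.
rewrite /quant_err /unif01 integral_uniform //= ?subr0 ?invr1 ?mul1e //.
- by apply/measurable_EFinP; exact: measurable_dist2.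
- by move=> x; rewrite lee_fin dist2_ge0.
Qed.

Lemma cond_opt_le (P : probability (measurableTypeR R) R) beta n gamma s :
  cond_opt_set P beta n gamma -> {subset beta <= s} ->
  (size (undup [seq x <- s | x \notin beta]) <= count (fun x => x \notin beta) gamma)%N ->
  (quant_err P gamma <= quant_err P s)%E.
Proof.
case=> uniq_g [alpha [_ size_alpha g_alpha]] opt _ beta_s size_s.
pose alpha' := undup [seq x <- s | x \notin beta].
have -> : quant_err P s = quant_err P (alpha' ++ beta).
  rewrite /quant_err; apply: eq_integral => x _; congr EFin; apply: dist2_eq_mem => y.
  rewrite mem_cat mem_undup mem_filter; case: (boolP (y \in beta)) => [/beta_s -> //| _].
  by rewrite orbF.
apply: opt; first exact: undup_uniq.
apply: leq_trans size_s (leq_trans _ size_alpha).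
rewrite -size_filter uniq_leq_size ?filter_uniq // => y.
by rewrite mem_filter g_alpha mem_cat => /andP[/negbTE-> ]; rewrite orbF.
Qed.

Lemma cond_opt_beta_sub (P : probability (measurableTypeR R) R) beta n gamma :
  cond_opt_set P beta n gamma -> {subset beta <= gamma}.
Proof. by case=> _ [alpha [_ _ g_alpha]] _ _ b bb; rewrite g_alpha mem_cat bb orbT. Qed.

End ConditionalOptimality.

Section TwoWindows.
Variables (R : realType) (beta : seq R) (n : nat) (gamma : seq R).
Hypothesis gamma_opt : cond_opt_set (unif01 R) beta n gamma.
Variables c1 d1 c2 d2 : R.
Hypotheses (c1_ge0 : 0 <= c1) (c1_lt_d1 : c1 < d1) (d1_le_c2 : d1 <= c2).
Hypotheses (c2_lt_d2 : c2 < d2) (d2_le1 : d2 <= 1).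
Hypotheses (c1_in : c1 \in gamma) (d1_in : d1 \in gamma).
Hypotheses (c2_in : c2 \in gamma) (d2_in : d2 \in gamma).

Definition off_windows (x : R) := ~~ (c1 < x < d1) && ~~ (c2 < x < d2).

Hypothesis beta_off : {in beta, forall b, off_windows b}.

Local Notation m1 := (count (fun x : R => c1 < x < d1) gamma).
Local Notation m2 := (count (fun x : R => c2 < x < d2) gamma).
Local Notation core := [seq x <- gamma | off_windows x].

Definition competitor (G1 G2 : nat) := core ++ grid c1 d1 G1 ++ grid c2 d2 G2.

Lemma windows_disjoint (x : R) : c1 < x < d1 -> ~~ (c2 < x < d2).
Proof. by case/andP=> _ xd1; rewrite negb_and -leNgt (le_trans (ltW xd1) d1_le_c2). Qed.

Lemma count_notin_beta :
  count (fun x => x \notin beta) gamma = (count (fun x => x \notin beta) core + m1 + m2)%N.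
Proof.
have pt (x : R) : (x \notin beta) =
    ((x \notin beta) && off_windows x + (c1 < x < d1)%R + (c2 < x < d2)%R)%N :> nat.
  rewrite /off_windows; have [w1|nw1] := boolP (c1 < x < d1).
    rewrite (negbTE (windows_disjoint w1)) /= andbF.
    by case: (boolP (x \in beta)) => // /beta_off; rewrite /off_windows w1.
  have [w2|nw2] := boolP (c2 < x < d2); last by rewrite /= !andbT !addn0.
  by case: (boolP (x \in beta)) => // /beta_off; rewrite /off_windows w2 andbF.
by rewrite count_filter; exact: count_add3.
Qed.

Lemma quant_err_le_competitor G1 G2 : (0 < G1)%N -> (0 < G2)%N -> (G1 + G2 <= m1 + m2 + 2)%N ->
  (quant_err (unif01 R) gamma <= quant_err (unif01 R) (competitor G1 G2))%E.
Proof.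
move=> G1_gt0 G2_gt0 G12; apply: (cond_opt_le gamma_opt).
  by move=> b bb; rewrite mem_cat mem_filter beta_off // (cond_opt_beta_sub gamma_opt bb).
apply: leq_trans (size_undup _) _; rewrite size_filter count_notin_beta !count_cat.
rewrite -addnA leq_add2l; apply: leq_trans (leq_add (count_size _ _) (count_size _ _)) _.
by rewrite !size_grid; lia.
Qed.

Lemma endpoints_in_core : [/\ c1 \in core, d1 \in core, c2 \in core & d2 \in core].
Proof.
move: (c1_lt_d1) (d1_le_c2) (c2_lt_d2) => ? ? ?.
by rewrite !mem_filter c1_in d1_in c2_in d2_in /off_windows !negb_and -!leNgt !andbT; split;
  apply/andP; split; apply/orP; (left + right); lra.
Qed.

Lemma dist2_eq_core t x : {subset core <= t} ->
  (forall a, a \in t -> [\/ a \in core, c1 < a < d1 | c2 < a < d2]) ->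
  off_windows x -> dist2 t x = dist2 core x.
Proof.
have [c1_core d1_core c2_core d2_core] := endpoints_in_core.
move=> core_t t_split /andP[x_off1 x_off2]; apply: dist2_dominated => //.
  by case: [seq _ <- _ | _] c1_core.
move=> a /t_split[a_core | a_in1 | a_in2]; first by exists a.
- by case: (window_dominated a_in1 x_off1) => ?; [exists c1 | exists d1].
- by case: (window_dominated a_in2 x_off2) => ?; [exists c2 | exists d2].
Qed.

Lemma dist2_competitor G1 G2 x : off_windows x -> dist2 (competitor G1 G2) x = dist2 gamma x.
Proof.
move=> x_off; rewrite !dist2_eq_core //.
- by move=> a; rewrite mem_filter => /andP[].
- move=> a a_g; case a_off: (off_windows a); first by apply: Or31; rewrite mem_filter a_off.
  by move/negbT: a_off; rewrite negb_and !negbK => /orP[]; [apply: Or32 | apply: Or33].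
- by move=> a a_core; rewrite mem_cat a_core.
move=> a; rewrite !mem_cat => /or3P[a_core | /(grid_inside c1_lt_d1) | /(grid_inside c2_lt_d2)].
- exact: Or31.
- exact: Or32.
- exact: Or33.
Qed.

Lemma windows_balance G1 G2 : (0 < G1)%N -> (0 < G2)%N -> (G1 + G2 <= m1 + m2 + 2)%N ->
  grid_err (d1 - c1) m1.+1%:R + grid_err (d2 - c2) m2.+1%:R <=
  grid_err (d1 - c1) G1%:R + grid_err (d2 - c2) G2%:R.
Proof.
move=> G1_gt0 G2_gt0 G12; rewrite leNgt; apply/negP => gain.
have [c1_core d1_core c2_core d2_core] := endpoints_in_core.
have := quant_err_le_competitor G1_gt0 G2_gt0 G12; rewrite !quant_err_unif01.
apply/negP; rewrite -ltNge.
have in_s a : a \in core -> a \in competitor G1 G2 by rewrite mem_cat => ->.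
apply: (Iab_lt_off_windows c1_ge0 (ltW c1_lt_d1) d1_le_c2 (ltW c2_lt_d2) d2_le1).
- exact: measurable_dist2.
- exact: measurable_dist2.
- exact: dist2_ge0.
- exact: dist2_ge0.
- exact: (Iab_dist2_fin_num ler01 c1_in).
- by move=> x off1 off2; rewrite dist2_competitor // /off_windows off1 off2.
apply: (@le_lt_trans _ _ ((grid_err (d1 - c1) G1%:R + grid_err (d2 - c2) G2%:R)%:E)).
  rewrite EFinD; apply: leeD; apply: Iab_dist2_grid_le; rewrite ?ltW ?in_s // => a a_grid;
    by rewrite !mem_cat a_grid ?orbT.
apply: (@lt_le_trans _ _ ((grid_err (d1 - c1) m1.+1%:R + grid_err (d2 - c2) m2.+1%:R)%:E)).
  by rewrite lte_fin.
by rewrite EFinD; apply: leeD; apply: Iab_dist2_ge; rewrite ?ltW.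
Qed.

Lemma window_counts_close : d1 - c1 = d2 - c2 -> (m1 <= m2.+1)%N /\ (m2 <= m1.+1)%N.
Proof.
move=> eqL; have L_gt0 : 0 < d1 - c1 by rewrite subr_gt0.
have step p q : (0 < p < q)%N ->
    grid_err (d1 - c1) q%:R - grid_err (d1 - c1) q.+1%:R <
    grid_err (d1 - c1) p%:R - grid_err (d1 - c1) p.+1%:R.
  by move=> pq; rewrite -!natr1 grid_err_step_lt // !ltr0n !ltr_nat.
have := @windows_balance; rewrite -eqL => balance.
split; rewrite leqNgt; apply/negP => lt_m.
(* Move one interior point from the fuller window to the other one. *)
- have /(_ (ltn_trans (ltn0Sn _) lt_m) isT) := balance m1 m2.+2.
  rewrite -addnA addn2 leqnn => /(_ isT).
  have := step m2.+1 m1 lt_m; lra.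
- have /(_ isT (ltn_trans (ltn0Sn _) lt_m)) := balance m1.+2 m2.
  rewrite addn2 !addSn leqnn => /(_ isT).
  have := step m1.+1 m2 lt_m; lra.
Qed.

End TwoWindows.

Section UniformGrid.
Variables (R : realType) (k : nat).
Hypothesis k_gt0 : (0 < k)%N.

Lemma ltr_natdiv (a b : nat) : (a%:R / k%:R < b%:R / k%:R :> R) = (a < b)%N.
Proof. by rewrite ltr_pM2r ?invr_gt0 ?ltr0n // ltr_nat. Qed.

Lemma ler_natdiv (a b : nat) : (a%:R / k%:R <= b%:R / k%:R :> R) = (a <= b)%N.
Proof. by rewrite ler_pM2r ?invr_gt0 ?ltr0n // ler_nat. Qed.

Lemma natdiv_le1 a : (a <= k)%N -> a%:R / k%:R <= 1 :> R.
Proof. by move=> ak; rewrite ler_pdivrMr ?ltr0n // mul1r ler_nat. Qed.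

Lemma natdiv_predn u : (0 < u)%N -> u%:R / k%:R - u.-1%:R / k%:R = k%:R^-1 :> R.
Proof. by case: u => // u _; rewrite -mulrBl -natrB // subSnn mul1r. Qed.

Lemma mem_beta_k t : (1 <= t <= k)%N -> t%:R / k%:R \in beta_k R k.
Proof. by move=> t1k; apply/mapP; exists t; rewrite // mem_iota; lia. Qed.

Lemma beta_k_off_window u b : b \in beta_k R k -> ~~ (u.-1%:R / k%:R < b < u%:R / k%:R).
Proof.
case/mapP=> t _ ->; rewrite !ltr_natdiv; apply/negP; lia.
Qed.

Lemma cardJ_count u gamma : (2 <= u <= k)%N -> uniq gamma -> {subset beta_k R k <= gamma} ->
  cardJ k u gamma = (count (fun x : R => u.-1%:R / k%:R < x < u%:R / k%:R) gamma).+2.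
Proof.
move=> u2k ug bg; set c := u.-1%:R / k%:R; set d := u%:R / k%:R.
have cd : c < d by rewrite ltr_natdiv; lia.
have split_J x : inJ k u x = ((c < x < d)%R + (x == c) + (x == d))%N :> nat.
  rewrite /inJ -/c -/d; case: (ltgtP x c) => [xc|cx|->] /=.
  - by rewrite (lt_eqF (lt_trans xc cd)).
  - by rewrite le_eqVlt orbC; case: (ltgtP x d).
  - by rewrite (ltW cd) (lt_eqF cd).
have mem1 a : a \in gamma -> count (fun x => x == a) gamma = 1%N.
  by move=> ag; rewrite (count_uniq_mem a ug) ag.
have [c_in d_in] : c \in gamma /\ d \in gamma by split; apply: bg; apply: mem_beta_k; lia.
by rewrite /cardJ size_filter (count_add3 _ split_J) (mem1 c c_in) (mem1 d d_in) !addn1.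
Qed.

End UniformGrid.

Lemma normz_sub_le1 (a b : nat) : (a <= b.+1)%N -> (b <= a.+1)%N ->
  `|a%:Z - b%:Z| \in [:: 0%Z; 1%Z].
Proof.
move=> ab ba; have [->|[->|->]] : a = b \/ a = b.+1 \/ b = a.+1 by lia.
- by rewrite subrr normr0 mem_head.
- by rewrite -addn1 PoszD addrAC subrr add0r normr1 !inE orbT.
- by rewrite -addn1 PoszD opprD addrA subrr add0r normrN normr1 !inE orbT.
Qed.

Theorem lemma4p2 (R : realType) (k n : nat) (gamma : seq R) :
  (1 <= k)%N -> (k <= n)%N ->
  cond_opt_set (unif01 R) (beta_k R k) n gamma ->
  forall i j : nat, (2 <= i)%N -> (i < j)%N -> (j <= k)%N ->
  `|(cardJ k i gamma)%:Z - (cardJ k j gamma)%:Z| \in [:: 0%Z; 1%Z].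
Proof.
move=> k_gt0 _ opt i j i2 ij jk; have beta_g := cond_opt_beta_sub opt.
have [uniq_g _ _ _] := opt.
have in_g t : (1 <= t <= k)%N -> t%:R / k%:R \in gamma.
  by move=> t1k; apply: beta_g; exact: mem_beta_k.
have [] := @window_counts_close R (beta_k R k) n gamma opt (i.-1%:R / k%:R) (i%:R / k%:R)
  (j.-1%:R / k%:R) (j%:R / k%:R).
- by rewrite divr_ge0 ?ler0n.
- by rewrite ltr_natdiv; lia.
- by rewrite ler_natdiv; lia.
- by rewrite ltr_natdiv; lia.
- exact: natdiv_le1.
- by apply: in_g; lia.
- by apply: in_g; lia.
- by apply: in_g; lia.
- by apply: in_g; lia.
- by move=> b bb; rewrite /off_windows !beta_k_off_window.
- by rewrite !natdiv_predn //; lia.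
move=> le_ij le_ji; rewrite !cardJ_count //; try lia.
by apply: normz_sub_le1; rewrite ltnS.
Qed.
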